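(* Let $K$ be an algebraically closed field with a non-trivial non-Archimedean valuation with dense value group, and a fixed splitting $\gamma\mapsto t^\gamma$. Let $\alpha=(\alpha_1,\dots,\alpha_6)\in(K^* )^6$ have distinct entries and $\omega_k=-\operatorname{val}(\alpha_k)$. Let $\omega$ be a value attained by at least two of the $\omega_k$, and set $\beta=\max\{\operatorname{val}(\alpha_m-\alpha_l):\omega_m=\omega_l=\omega,\ m\ne l\}$ (so $\beta\ge-\omega$). Fix indices $i\neq j$ with $\omega_i=\omega_j=\omega$ and $\operatorname{val}(\alpha_i-\alpha_j)=\beta$. Let $\zeta\in K$ with $\operatorname{val}(\zeta)=0$ be such that $\operatorname{in}(\alpha_i-\alpha_j)=\overline{\zeta}\in\widetilde K$, and choose $\gamma\in\operatorname{val}(K^* )$ with $\beta<\gamma<\operatorname{val}(\alpha_i-\alpha_j-\zeta t^\beta)$. Let $\psi\colon\mathbb{P}^1\to\mathbb{P}^1$ be the linear change of coordinates $\psi(x)=x-\alpha_j-\zeta t^\beta-t^\gamma$ and $\alpha'_s=\psi(\alpha_s)$. Then $\alpha'\in(K^* )^6$ and $\omega'_s=-\operatorname{val}(\alpha'_s)$ satisfy: (1) if $\omega_s>\omega_i$ then $\omega'_s=\omega_s$; (2) if $\omega_s<\omega_i$ then $\omega'_s=\omega_i$ and $\operatorname{in}(\alpha'_s)=-\operatorname{in}(\alpha_i)$; (3) if $\omega_s=\omega_i$ and $s\ne i$ then $\omega'_i=-\gamma<\omega'_s=-\operatorname{val}(\alpha_s-\alpha_i)\le\omega_i$.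
   Context: For $a\in K^*$, $\operatorname{in}(a)$ denotes the class of $a\,t^{-\operatorname{val}(a)}$ in the residue field $\widetilde K$. *)

From HB Require Import structures.
From mathcomp Require Import all_boot all_order all_algebra.
From mathcomp Require Import reals constructive_ereal.
Set Implicit Arguments. Unset Strict Implicit. Unset Printing Implicit Defensive.
Import Order.TTheory GRing.Theory Num.Theory.
Local Open Scope ring_scope.
Local Open Scope ereal_scope.

Definition is_nonarch_val (K : fieldType) (R : realType) (val : K -> \bar R) :=
  (forall x : K, (val x = +oo) <-> x = 0%R) /\
  (forall x : K, val x != -oo) /\
  (forall x y : K, val (x * y)%R = val x + val y) /\
  (forall x y : K, Order.min (val x) (val y) <= val (x + y)%R) /\
  (exists x : K, x != 0%R /\ val x != 0).

Definition dense_value_group (K : fieldType) (R : realType) (val : K -> \bar R) :=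
  forall a b : R, (a < b)%R -> exists x : K, x != 0%R /\ a%:E < val x < b%:E.

Definition in_value_group (K : fieldType) (R : realType) (val : K -> \bar R)
  (g : R) := exists x : K, x != 0%R /\ val x = g%:E.

(* A splitting gamma |-> t^gamma of the valuation: a group homomorphism
   from val(K^* ) to K^* which is a section of val. Only its values on the
   value group are relevant. *)
Definition is_splitting (K : fieldType) (R : realType) (val : K -> \bar R)
  (tpow : R -> K) :=
  (forall g, in_value_group val g -> tpow g != 0%R /\ val (tpow g) = g%:E) /\
  (forall g h, in_value_group val g -> in_value_group val h ->
     tpow (g + h)%R = (tpow g * tpow h)%R).

Definition rval (K : fieldType) (R : realType) (val : K -> \bar R) (a : K) : R :=
  fine (val a).

(* the representative a t^{-val a} of in(a) in the valuation ring *)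
Definition inrep (K : fieldType) (R : realType) (val : K -> \bar R)
  (tpow : R -> K) (a : K) : K := (a * tpow (- rval val a))%R.

(* Equality of classes in the residue field: two elements u, v of the
   valuation ring have the same residue class iff val (u - v) > 0. *)
Definition res_eq (K : fieldType) (R : realType) (val : K -> \bar R) (u v : K) :=
  0 < val (u - v)%R.

Definition in_eq (K : fieldType) (R : realType) (val : K -> \bar R)
  (tpow : R -> K) (a b : K) :=
  res_eq val (inrep val tpow a) (inrep val tpow b).

From HB Require Import structures.
From mathcomp Require Import all_boot all_order all_algebra.
From mathcomp Require Import reals constructive_ereal.
From mathcomp Require Import ring lra.
Set Implicit Arguments. Unset Strict Implicit.
Import Order.TTheory GRing.Theory Num.Theory.
Local Open Scope ring_scope.
Local Open Scope ereal_scope.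

(* Put [E := alpha_i - alpha_j - zeta t^beta - t^gamma]. Since
   [val (alpha_i - alpha_j - zeta t^beta) > gamma = val t^gamma], we get
   [val E = gamma], and [psi x = x - c] with [c = alpha_i - E] of valuation
   [val alpha_i = -omega], because [gamma > beta >= val alpha_i]. Everything
   then follows from the strict triangle inequality: far points [x] (with
   [val x < val c]) keep their valuation, near points are sent to points of
   valuation [val c] with leading term [-in(c) = -in(alpha_i)], and inside the
   cluster [psi alpha_s = (alpha_s - alpha_i) + E] where
   [val (alpha_s - alpha_i) <= beta < gamma = val E]. *)

Section NonArchimedeanValuation.
Variables (K : fieldType) (R : realType) (val : K -> \bar R).
Hypothesis hval : is_nonarch_val val.

Lemma val_eq_pinfty x : val x = +oo <-> x = 0%R.
Proof. by case: hval. Qed.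

Lemma valM x y : val (x * y)%R = val x + val y.
Proof. by case: hval => _ [_ []]. Qed.

Lemma val_add_ge_min x y : Order.min (val x) (val y) <= val (x + y)%R.
Proof. by case: hval => _ [_ [_ []]]. Qed.

Lemma val_fin {x} : x != 0%R -> val x = (rval val x)%:E.
Proof.
move=> x0; rewrite /rval; case: hval => _ [nninfty _].
case E: (val x) => [r| |] //=.
- by move: x0; rewrite -(val_eq_pinfty x).1 // eqxx.
- by move: (nninfty x); rewrite E.
Qed.

Lemma val1 : val 1%R = 0.
Proof.
have := valM 1%R 1%R; rewrite mulr1 (val_fin (oner_neq0 K)) -EFinD => -[h].
by congr EFin; lra.
Qed.

Lemma valN x : val (- x)%R = val x.
Proof.
have valN1 : val (-1)%R = 0.
  have := valM (-1)%R (-1)%R; rewrite mulrNN mulr1 val1.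
  rewrite (val_fin (x := (-1)%R)) ?oppr_eq0 ?oner_neq0 // -EFinD => -[h].
  by congr EFin; lra.
by rewrite -mulN1r valM valN1 add0e.
Qed.

Lemma valV x : x != 0%R -> val (x^-1)%R = (- rval val x)%:E.
Proof.
move=> x0; have := valM x (x^-1)%R.
rewrite mulfV // val1 (val_fin x0) (val_fin (x := x^-1%R)) ?invr_eq0 //.
by rewrite -EFinD => -[h]; congr EFin; lra.
Qed.

Lemma val_add_ge e x y : e <= val x -> e <= val y -> e <= val (x + y)%R.
Proof.
by move=> ex ey; apply: le_trans (val_add_ge_min x y); rewrite le_min ex ey.
Qed.

Lemma val_sub_ge e x y : e <= val x -> e <= val y -> e <= val (x - y)%R.
Proof. by move=> ex ey; apply: val_add_ge; rewrite ?valN. Qed.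

Lemma val_add_gt e x y : e < val x -> e < val y -> e < val (x + y)%R.
Proof.
by move=> ex ey; apply: lt_le_trans (val_add_ge_min x y); rewrite lt_min ex ey.
Qed.

Lemma val_add_ltl x y : val x < val y -> val (x + y)%R = val x.
Proof.
move=> lt_xy; apply/eqP; rewrite eq_le; apply/andP; split.
  have := val_add_ge_min (x + y) (- y); rewrite addrK valN /Order.min.
  by case: ifP => // _ le_y; move: (le_lt_trans le_y lt_xy); rewrite ltxx.
by have := val_add_ge_min x y; rewrite /Order.min lt_xy.
Qed.

Lemma val_sub_ltl x y : val x < val y -> val (x - y)%R = val x.
Proof. by move=> lt_xy; rewrite val_add_ltl ?valN. Qed.

Lemma val_sub_ltr x y : val y < val x -> val (x - y)%R = val y.
Proof. by move=> lt_yx; rewrite addrC val_add_ltl ?valN. Qed.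

End NonArchimedeanValuation.

Section Splitting.
Variables (K : fieldType) (R : realType) (val : K -> \bar R) (tpow : R -> K).
Hypotheses (hval : is_nonarch_val val) (hsplit : is_splitting val tpow).

Lemma val_tpow g : in_value_group val g -> val (tpow g) = g%:E.
Proof. by case: hsplit => + _ => /[apply] -[]. Qed.

Lemma in_value_group_rvalN a : a != 0%R -> in_value_group val (- rval val a).
Proof. by move=> a0; exists (a^-1)%R; rewrite invr_eq0 a0 (valV hval a0). Qed.

Lemma in_eq_val_sub a b : a != 0%R -> val b = val a -> val a < val (a - b)%R ->
  in_eq val tpow a b.
Proof.
move=> a0 vba lt_ab; rewrite /in_eq /res_eq /inrep {2}/rval vba -/(rval val a).
rewrite -mulrBl (valM hval) (val_tpow (in_value_group_rvalN a0)).
move: lt_ab; rewrite (val_fin hval a0).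
case: (val (a - b)%R) => [r| |] //; last by rewrite addye ?ltry.
by rewrite -EFinD !lte_fin => ?; lra.
Qed.

End Splitting.

Section Recentering.
Variables (K : fieldType) (R : realType) (val : K -> \bar R).
Hypothesis hval : is_nonarch_val val.
Variables (I : eqType) (a : I -> K) (i : I) (E : K) (g : R).
Hypotheses (a_neq0 : forall s, a s != 0%R) (a_inj : injective a).
Hypotheses (val_E : val E = g%:E) (val_ai_lt : val (a i) < g%:E).
Hypothesis cluster_lt : forall s, val (a s) = val (a i) -> s != i ->
  val (a s - a i)%R < g%:E.

Definition recenter s := (a s - (a i - E))%R.

Lemma val_shift : val (a i - E)%R = val (a i).
Proof. by rewrite val_sub_ltl // val_E. Qed.

Lemma val_recenter_far s :
  val (a s) < val (a i) -> val (recenter s) = val (a s).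
Proof. by move=> lt_si; rewrite val_sub_ltl // val_shift. Qed.

Lemma val_recenter_near s :
  val (a i) < val (a s) -> val (recenter s) = val (a i).
Proof. by move=> lt_is; rewrite val_sub_ltr // val_shift. Qed.

Lemma val_recenter_i : val (recenter i) = g%:E.
Proof. by rewrite /recenter opprB addrC subrK. Qed.

Lemma val_recenter_cluster s : val (a s) = val (a i) -> s != i ->
  val (recenter s) = val (a s - a i)%R.
Proof.
move=> vsi si.
have -> : recenter s = (a s - a i + E)%R by rewrite /recenter; ring.
by rewrite val_add_ltl // val_E; apply: cluster_lt.
Qed.

Lemma recenter_neq0 s : recenter s != 0%R.
Proof.
apply/eqP => /(val_eq_pinfty hval).
have eq0_of_pinfty x : val x = +oo -> x = 0%R := (val_eq_pinfty hval x).1.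
case: (ltgtP (val (a s)) (val (a i))) => [lt_si|lt_is|eq_si].
- by rewrite val_recenter_far // => /eq0_of_pinfty/eqP; apply/negP.
- by rewrite val_recenter_near // => /eq0_of_pinfty/eqP; apply/negP.
- have [->|si] := eqVneq s i; first by rewrite val_recenter_i.
  rewrite val_recenter_cluster // => /eq0_of_pinfty/eqP.
  by rewrite subr_eq0 => /eqP/a_inj/eqP; apply/negP.
Qed.

Variable tpow : R -> K.
Hypothesis hsplit : is_splitting val tpow.

Lemma in_eq_recenter_near s : val (a i) < val (a s) ->
  in_eq val tpow (recenter s) (- a i)%R.
Proof.
move=> lt_is; apply: in_eq_val_sub => //; first exact: recenter_neq0.
  by rewrite valN // (val_recenter_near lt_is).
have -> : (recenter s - - a i = a s + E)%R by rewrite /recenter; ring.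
by rewrite (val_recenter_near lt_is); apply: val_add_gt; rewrite // val_E.
Qed.

End Recentering.

Theorem lemma5p3 (K : closedFieldType) (R : realType) (val : K -> \bar R)
  (tpow : R -> K)
  (hval : is_nonarch_val val) (hdense : dense_value_group val)
  (hsplit : is_splitting val tpow)
  (alpha : 'I_6 -> K)
  (halpha0 : forall k, alpha k != 0%R) (halpha_inj : injective alpha)
  (i j : 'I_6) (hij : i != j)
  (homega_ij : - val (alpha i) = - val (alpha j))
  (hbeta_max : forall m l : 'I_6, m != l ->
      - val (alpha m) = - val (alpha i) -> - val (alpha l) = - val (alpha i) ->
      val (alpha m - alpha l)%R <= val (alpha i - alpha j)%R)
  (zeta : K) (hzeta : val zeta = 0)
  (hin : res_eq val (inrep val tpow (alpha i - alpha j)%R) zeta)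
  (g : R) (hg : in_value_group val g)
  (hbg : val (alpha i - alpha j)%R < g%:E)
  (hg2 : g%:E < val (alpha i - alpha j
                      - zeta * tpow (rval val (alpha i - alpha j)%R))%R) :
  let beta := rval val (alpha i - alpha j)%R in
  let psi := fun x : K => (x - alpha j - zeta * tpow beta - tpow g)%R in
  let alpha' := fun s => psi (alpha s) in
  let omega := fun s => - val (alpha s) in
  let omega' := fun s => - val (alpha' s) in
  (forall s, alpha' s != 0%R) /\
  (forall s, omega s > omega i -> omega' s = omega s) /\
  (forall s, omega s < omega i ->
     omega' s = omega i /\ in_eq val tpow (alpha' s) (- alpha i)%R) /\
  (forall s, omega s = omega i -> s != i ->
     omega' i = (- g)%:E /\ (- g)%:E < omega' s /\
     omega' s = - val (alpha s - alpha i)%R /\ omega' s <= omega i).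
Proof.
move=> beta psi alpha' omega omega'.
set E := (alpha i - alpha j - zeta * tpow beta - tpow g)%R.
have val_E : val E = g%:E by rewrite val_sub_ltr // (val_tpow hsplit hg).
have val_ai_lt : val (alpha i) < g%:E.
  apply: le_lt_trans hbg; apply: val_sub_ge => //.
  by rewrite -[val (alpha j)]oppeK -homega_ij oppeK.
have cluster_lt s : val (alpha s) = val (alpha i) -> s != i ->
    val (alpha s - alpha i)%R < g%:E.
  by move=> vsi si; apply: le_lt_trans hbg; apply: hbeta_max; rewrite ?vsi.
have alpha'E s : alpha' s = recenter alpha i E s.
  by rewrite /alpha' /psi /recenter /E; ring.
rewrite /omega' /omega; split; last split; last split.
- move=> s; rewrite alpha'E.
  exact: (recenter_neq0 hval halpha0 halpha_inj val_E val_ai_lt cluster_lt).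
- move=> s; rewrite lteN2 => lt_si.
  by rewrite alpha'E (val_recenter_far hval val_E val_ai_lt).
- move=> s; rewrite lteN2 => lt_is; rewrite alpha'E.
  rewrite (val_recenter_near hval val_E val_ai_lt lt_is); split=> //.
  exact: (in_eq_recenter_near hval halpha0 halpha_inj val_E val_ai_lt
           cluster_lt hsplit).
- move=> s /oppe_inj vsi si; rewrite !alpha'E (val_recenter_i alpha i val_E).
  rewrite (val_recenter_cluster hval val_E cluster_lt vsi si).
  rewrite EFinN lteN2 leeN2 cluster_lt //; split=> //; split=> //; split=> //.
  by apply: val_sub_ge; rewrite // vsi.
Qed.
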